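(* Let $\mathbb{C}$ be an almost exact Gumm category. Suppose given morphisms $\varphi\colon P\to Z$, $x\colon P\to X$, $f\colon X\to Y$, $y\colon Z\to Y$, $u\colon X\to U$, $v\colon Y\to V$, $w\colon U\to V$ with $fx=y\varphi$ and $wu=vf$, such that $\varphi,x,f,y$ are regular epimorphisms, the square $fx=y\varphi$ is a pushout, and the outer rectangle (the square with sides $\varphi$, $ux$, $vy$, $w$) is a pullback. Then both squares $fx=y\varphi$ and $wu=vf$ are pullbacks.
   Context: A regular category is a finitely complete category in which every kernel pair has a coequaliser and regular epimorphisms are stable under pullback. A regular category is almost exact if every regular epimorphism is an effective descent morphism; equivalently, for every regular epimorphism $f\colon X\to Y$ with kernel pair $R_f$ and every equivalence relation $R$ on an object $X'$ equipped with a morphism of relations $(g,h)\colon R\to R_f$ (with $g\colon X'\to X$) which is a discrete fibration (the squares formed by the projections are pullbacks), $R$ is an effective equivalence relation (a kernel pair). For equivalence relations $R,S$ on an object $X$, $R\square S$ denotes the largest double equivalence relation on $R$ and $S$: in generalized elements, the relation on $R$ consisting of pairs $((a,b),(c,d))$ with $(a,b),(c,d)\in R$, $(a,c)\in S$, $(b,d)\in S$, with projections $\pi_1,\pi_2$ to $R$. A finitely complete category is a Gumm category if for all equivalence relations $R,S,T$ on a same object with $R\wedge S\le T\le R$, the canonical inclusion $T\square S\to R\square S$ over $T\to R$ is a discrete fibration, i.e. the squares it forms with the projections $\pi_1$, $\pi_2$ are pullbacks. *)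

Record Category := {
  Ob :> Type;
  Hom : Ob -> Ob -> Type;
  idm : forall A, Hom A A;
  comp : forall A B C, Hom B C -> Hom A B -> Hom A C;
  comp_assoc : forall A B C D (h : Hom C D) (g : Hom B C) (f : Hom A B),
      comp A C D h (comp A B C g f) = comp A B D (comp B C D h g) f;
  id_left : forall A B (f : Hom A B), comp A B B (idm B) f = f;
  id_right : forall A B (f : Hom A B), comp A A B f (idm A) = f
}.

Arguments Hom {c} _ _.
Arguments idm {c} _.
Arguments comp {c} {A B C} _ _.

Notation "A ~> B" := (Hom A B) (at level 90, right associativity).
Notation "g \o f" := (comp g f) (at level 40, left associativity).

Section Cat.
Context {C : Category}.

Definition is_pullback {A B Cc P : C} (f : A ~> Cc) (g : B ~> Cc)
    (p1 : P ~> A) (p2 : P ~> B) : Prop :=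
  f \o p1 = g \o p2 /\
  forall (Q : C) (q1 : Q ~> A) (q2 : Q ~> B), f \o q1 = g \o q2 ->
    exists h : Q ~> P, p1 \o h = q1 /\ p2 \o h = q2 /\
      forall h' : Q ~> P, p1 \o h' = q1 -> p2 \o h' = q2 -> h' = h.

Definition is_pushout {P A B Q : C} (a : P ~> A) (b : P ~> B)
    (qa : A ~> Q) (qb : B ~> Q) : Prop :=
  qa \o a = qb \o b /\
  forall (W : C) (wa : A ~> W) (wb : B ~> W), wa \o a = wb \o b ->
    exists h : Q ~> W, h \o qa = wa /\ h \o qb = wb /\
      forall h' : Q ~> W, h' \o qa = wa -> h' \o qb = wb -> h' = h.

Definition is_terminal (T : C) : Prop :=
  forall A : C, exists h : A ~> T, forall h' : A ~> T, h' = h.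

Definition is_coequalizer {K X Q : C} (k1 k2 : K ~> X) (q : X ~> Q) : Prop :=
  q \o k1 = q \o k2 /\
  forall (W : C) (g : X ~> W), g \o k1 = g \o k2 ->
    exists h : Q ~> W, h \o q = g /\ forall h' : Q ~> W, h' \o q = g -> h' = h.

Definition regular_epi {X Y : C} (f : X ~> Y) : Prop :=
  exists (K : C) (k1 k2 : K ~> X), is_coequalizer k1 k2 f.

Definition is_kernel_pair {X Y K : C} (f : X ~> Y) (k1 k2 : K ~> X) : Prop :=
  is_pullback f f k1 k2.

Definition jointly_monic {A X Y : C} (a : A ~> X) (b : A ~> Y) : Prop :=
  forall (Q : C) (h k : Q ~> A), a \o h = a \o k -> b \o h = b \o k -> h = k.

(** Internal relations R on X are jointly monic spans r1, r2 : R ~> X;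
    reflexivity / symmetry / transitivity are stated in generalized elements. *)
Definition is_relation {R X : C} (r1 r2 : R ~> X) : Prop := jointly_monic r1 r2.

Definition rel_reflexive {R X : C} (r1 r2 : R ~> X) : Prop :=
  forall (A : C) (a : A ~> X), exists h : A ~> R, r1 \o h = a /\ r2 \o h = a.

Definition rel_symmetric {R X : C} (r1 r2 : R ~> X) : Prop :=
  forall (A : C) (h : A ~> R), exists h' : A ~> R,
    r1 \o h' = r2 \o h /\ r2 \o h' = r1 \o h.

Definition rel_transitive {R X : C} (r1 r2 : R ~> X) : Prop :=
  forall (A : C) (h k : A ~> R), r2 \o h = r1 \o k ->
    exists l : A ~> R, r1 \o l = r1 \o h /\ r2 \o l = r2 \o k.

Definition is_equivalence_relation {R X : C} (r1 r2 : R ~> X) : Prop :=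
  is_relation r1 r2 /\ rel_reflexive r1 r2 /\ rel_symmetric r1 r2 /\
  rel_transitive r1 r2.

Definition effective_relation {R X : C} (r1 r2 : R ~> X) : Prop :=
  exists (W : C) (g : X ~> W), is_kernel_pair g r1 r2.

Definition rel_le {R T X : C} (r1 r2 : R ~> X) (t1 t2 : T ~> X) : Prop :=
  exists m : R ~> T, t1 \o m = r1 /\ t2 \o m = r2.

(** R /\ S <= T, in generalized elements:
    every pair (a,b) lying in both R and S lies in T. *)
Definition meet_le {R S T X : C} (r1 r2 : R ~> X) (s1 s2 : S ~> X)
    (t1 t2 : T ~> X) : Prop :=
  forall (A : C) (a : A ~> R) (b : A ~> S), r1 \o a = s1 \o b -> r2 \o a = s2 \o b ->
    exists c : A ~> T, t1 \o c = r1 \o a /\ t2 \o c = r2 \o a.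

(** (D, p1, p2) represents R [] S : the relation on R consisting of the pairs
    ((a,b),(c,d)) of elements of R with (a,c) in S and (b,d) in S. *)
Definition is_box {R S D X : C} (r1 r2 : R ~> X) (s1 s2 : S ~> X)
    (p1 p2 : D ~> R) : Prop :=
  jointly_monic p1 p2 /\
  forall (A : C) (e1 e2 : A ~> R),
    (exists d : A ~> D, p1 \o d = e1 /\ p2 \o d = e2) <->
    ((exists s : A ~> S, s1 \o s = r1 \o e1 /\ s2 \o s = r1 \o e2) /\
     (exists s : A ~> S, s1 \o s = r2 \o e1 /\ s2 \o s = r2 \o e2)).

End Cat.

Definition finitely_complete (C : Category) : Prop :=
  (exists T : C, is_terminal T) /\
  forall (A B D : C) (f : A ~> D) (g : B ~> D),
    exists (P : C) (p1 : P ~> A) (p2 : P ~> B), is_pullback f g p1 p2.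

Definition regular_category (C : Category) : Prop :=
  finitely_complete C /\
  (forall (X Y K : C) (f : X ~> Y) (k1 k2 : K ~> X), is_kernel_pair f k1 k2 ->
     exists (Q : C) (q : X ~> Q), is_coequalizer k1 k2 q) /\
  (forall (A B D P : C) (f : A ~> D) (g : B ~> D) (p1 : P ~> A) (p2 : P ~> B),
     is_pullback f g p1 p2 -> regular_epi g -> regular_epi p1).

(** Almost exact: for every regular epi f with kernel pair R_f, every
    equivalence relation R with a discrete fibration (g,h) : R -> R_f is
    effective. *)
Definition almost_exact (C : Category) : Prop :=
  regular_category C /\
  forall (X Y K : C) (f : X ~> Y) (k1 k2 : K ~> X),
    regular_epi f -> is_kernel_pair f k1 k2 ->
    forall (X' R : C) (r1 r2 : R ~> X') (g : X' ~> X) (h : R ~> K),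
      is_equivalence_relation r1 r2 ->
      k1 \o h = g \o r1 -> k2 \o h = g \o r2 ->
      is_pullback g k1 r1 h -> is_pullback g k2 r2 h ->
      effective_relation r1 r2.

(** Gumm: for equivalence relations R, S, T on X with R /\ S <= T <= R,
    the canonical inclusion T [] S -> R [] S over m : T -> R is a discrete
    fibration. *)
Definition gumm_category (C : Category) : Prop :=
  finitely_complete C /\
  forall (X R S T : C) (r1 r2 : R ~> X) (s1 s2 : S ~> X) (t1 t2 : T ~> X),
    is_equivalence_relation r1 r2 -> is_equivalence_relation s1 s2 ->
    is_equivalence_relation t1 t2 ->
    meet_le r1 r2 s1 s2 t1 t2 ->
    forall m : T ~> R, r1 \o m = t1 -> r2 \o m = t2 ->
    forall (DT DR : C) (p1 p2 : DT ~> T) (q1 q2 : DR ~> R),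
      is_box t1 t2 s1 s2 p1 p2 -> is_box r1 r2 s1 s2 q1 q2 ->
      forall i : DT ~> DR, q1 \o i = m \o p1 -> q2 \o i = m \o p2 ->
        is_pullback q1 m i p1 /\ is_pullback q2 m i p2.


(* The relation [E = x(ker phi)] on [X], the regular image of the kernel pair of [phi]
   along [x], is an equivalence relation: reflexivity and symmetry are clear, and
   transitivity reduces, through the outer pullback, to the Gumm property for [ker (u x)],
   [ker phi] and [ker x], which applies because the outer pullback makes
   [ker (u x) /\ ker phi] trivial. The same pullback shows that [E] meets [ker u] in the
   diagonal and that [u] restricts to a discrete fibration [E -> ker w], so almost
   exactness makes [E] the kernel pair of some [g]. As [g x] coequalizes [ker phi], the
   pushout factors [g] through [f]; hence [ker f <= E], the pair [(u, f)] is jointly monic,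
   and both squares follow from the outer pullback. *)

Ltac assoc_r := repeat rewrite <- comp_assoc.

Section Basics.
Context {C : Category}.

Lemma comp_eq_r {A B B' D Q : C} (a : B ~> D) (b : A ~> B) (c : B' ~> D) (d : A ~> B')
    (h : Q ~> A) :
  a \o b = c \o d -> a \o (b \o h) = c \o (d \o h).
Proof. intros E. rewrite !comp_assoc, E. reflexivity. Qed.

Lemma regular_epi_epi {X Y W : C} (f : X ~> Y) (a b : Y ~> W) :
  regular_epi f -> a \o f = b \o f -> a = b.
Proof.
  intros [K [k1 [k2 [Hc Hu]]]] E.
  destruct (Hu W (a \o f)) as [h [_ Hh]].
  { assoc_r. rewrite Hc. reflexivity. }
  rewrite (Hh a eq_refl), (Hh b (eq_sym E)). reflexivity.
Qed.

Lemma regular_epi_factor {X Y W : C} (c : X ~> Y) (g : X ~> W) :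
  regular_epi c ->
  (forall Q (k1 k2 : Q ~> X), c \o k1 = c \o k2 -> g \o k1 = g \o k2) ->
  exists h, h \o c = g.
Proof.
  intros [K [k1 [k2 [Hc Hu]]]] H.
  destruct (Hu W g (H K k1 k2 Hc)) as [h [Hh _]]. eauto.
Qed.

Lemma pullback_lift {A B D P Q : C} (f : A ~> D) (g : B ~> D) (p1 : P ~> A) (p2 : P ~> B)
    (q1 : Q ~> A) (q2 : Q ~> B) :
  is_pullback f g p1 p2 -> f \o q1 = g \o q2 -> exists h, p1 \o h = q1 /\ p2 \o h = q2.
Proof. intros [_ Hu] E. destruct (Hu Q q1 q2 E) as [h [H1 [H2 _]]]. eauto. Qed.

Lemma pullback_jointly_monic {A B D P : C} (f : A ~> D) (g : B ~> D)
    (p1 : P ~> A) (p2 : P ~> B) :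
  is_pullback f g p1 p2 -> jointly_monic p1 p2.
Proof.
  intros [Hc Hu] Q h k E1 E2.
  destruct (Hu Q (p1 \o h) (p2 \o h)) as [m [_ [_ Hm]]].
  { apply comp_eq_r. exact Hc. }
  rewrite (Hm h eq_refl eq_refl), (Hm k (eq_sym E1) (eq_sym E2)). reflexivity.
Qed.

Lemma kernel_pair_comm {X Y K Q : C} (f : X ~> Y) (k1 k2 : K ~> X) (h : Q ~> K) :
  is_kernel_pair f k1 k2 -> f \o (k1 \o h) = f \o (k2 \o h).
Proof. intros [Hc _]. apply comp_eq_r. exact Hc. Qed.

Lemma kernel_pair_swap {X Y K : C} (f : X ~> Y) (k1 k2 : K ~> X) :
  is_kernel_pair f k1 k2 -> is_kernel_pair f k2 k1.
Proof.
  intros [Hc Hu]. split; [symmetry; exact Hc |].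
  intros Q q1 q2 E. destruct (Hu Q q2 q1 (eq_sym E)) as [h [H1 [H2 Hh]]].
  exists h. split; [exact H2 | split; [exact H1 |]].
  intros h' H1' H2'. exact (Hh h' H2' H1').
Qed.

Lemma kernel_pair_equivalence {X Y K : C} (f : X ~> Y) (k1 k2 : K ~> X) :
  is_kernel_pair f k1 k2 -> is_equivalence_relation k1 k2.
Proof.
  intros H. split; [| split; [| split]].
  - exact (pullback_jointly_monic _ _ _ _ H).
  - intros A a. exact (pullback_lift _ _ _ _ _ _ H eq_refl).
  - intros A h. apply (pullback_lift _ _ _ _ _ _ H).
    symmetry. apply kernel_pair_comm, H.
  - intros A h k E. apply (pullback_lift _ _ _ _ _ _ H).
    rewrite (kernel_pair_comm _ _ _ _ H), E. apply kernel_pair_comm, H.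
Qed.

Lemma kernel_pair_of_coequalizer {X Y K Q : C} (w : X ~> Y) (k1 k2 : K ~> X) (q : X ~> Q) :
  is_kernel_pair w k1 k2 -> is_coequalizer k1 k2 q -> is_kernel_pair q k1 k2.
Proof.
  intros Hw [Hq Hqu]. destruct (Hqu _ w (proj1 Hw)) as [m [Hm _]].
  split; [exact Hq |]. intros Q' q1 q2 E. apply (proj2 Hw).
  rewrite <- Hm. assoc_r. rewrite E. reflexivity.
Qed.

Lemma regular_epi_lift_jointly_monic {A A1 E X1 X2 : C} (e1 : E ~> X1) (e2 : E ~> X2)
    (a : A ~> X1) (b : A ~> X2)
    (c : A1 ~> A) (h1 : A1 ~> E) :
  jointly_monic e1 e2 -> regular_epi c -> e1 \o h1 = a \o c -> e2 \o h1 = b \o c ->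
  exists h, e1 \o h = a /\ e2 \o h = b.
Proof.
  intros Hjm Hc E1 E2.
  destruct (regular_epi_factor c h1 Hc) as [h Hh].
  { intros Q k1 k2 Ek. apply Hjm; rewrite !comp_assoc, ?E1, ?E2; assoc_r; rewrite Ek;
      reflexivity. }
  exists h. split; apply (regular_epi_epi c); auto; assoc_r; rewrite Hh; auto.
Qed.

Lemma jointly_monic_swap {A X1 X2 : C} (a : A ~> X1) (b : A ~> X2) :
  jointly_monic a b -> jointly_monic b a.
Proof. intros H Q h k E1 E2. exact (H Q h k E2 E1). Qed.

Lemma equivalence_jointly_monic_l {E X U : C} (e1 e2 : E ~> X) (u : X ~> U) :
  is_equivalence_relation e1 e2 ->
  (forall Q (h : Q ~> E), u \o (e1 \o h) = u \o (e2 \o h) -> e1 \o h = e2 \o h) ->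
  jointly_monic e1 (u \o e2).
Proof.
  intros [Hjm [_ [Hsym Htrans]]] Hdiag Q h h' E1 E2.
  destruct (Hsym Q h) as [hs [Hs1 Hs2]].
  destruct (Htrans Q hs h') as [l [Hl1 Hl2]]; [rewrite Hs2; exact E1 |].
  apply Hjm; [exact E1 |].
  rewrite <- Hs1, <- Hl1, <- Hl2. apply Hdiag.
  rewrite Hl1, Hl2, Hs1, <- !comp_assoc in *. exact E2.
Qed.

End Basics.

Section FiniteLimits.
Context {C : Category} (HF : finitely_complete C).

Lemma kernel_pair_exists {X Y : C} (f : X ~> Y) :
  exists K (k1 k2 : K ~> X), is_kernel_pair f k1 k2.
Proof. apply (proj2 HF). Qed.

Lemma binary_product_exists (X Y : C) :
  exists (Pr : C) (p1 : Pr ~> X) (p2 : Pr ~> Y), jointly_monic p1 p2 /\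
    forall Q (a : Q ~> X) (b : Q ~> Y), exists h, p1 \o h = a /\ p2 \o h = b.
Proof.
  destruct HF as [[T HT] Hpb].
  destruct (HT X) as [tX _], (HT Y) as [tY _].
  destruct (Hpb _ _ _ tX tY) as [Pr [p1 [p2 Hp]]].
  exists Pr, p1, p2. split; [exact (pullback_jointly_monic _ _ _ _ Hp) |].
  intros Q a b. apply (pullback_lift _ _ _ _ _ _ Hp).
  destruct (HT Q) as [t Ht]. rewrite (Ht (tX \o a)), (Ht (tY \o b)). reflexivity.
Qed.

(* With [S] the kernel pair of [phi], the box [R [] S] is the kernel pair of
   [(phi r1, phi r2) : R ~> Z x Z]. *)
Lemma box_exists {P Z R S : C} (r1 r2 : R ~> P) (phi : P ~> Z) (s1 s2 : S ~> P) :
  is_kernel_pair phi s1 s2 -> exists D (p1 p2 : D ~> R), is_box r1 r2 s1 s2 p1 p2.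
Proof.
  intros HS.
  destruct (binary_product_exists Z Z) as [ZZ [pi1 [pi2 [Hjm Hpr]]]].
  destruct (Hpr _ (phi \o r1) (phi \o r2)) as [rho [Hr1 Hr2]].
  destruct (kernel_pair_exists rho) as [D [p1 [p2 Hkp]]].
  assert (Hrho : forall A (e1 e2 : A ~> R), rho \o e1 = rho \o e2 <->
            phi \o (r1 \o e1) = phi \o (r1 \o e2) /\ phi \o (r2 \o e1) = phi \o (r2 \o e2)).
  { intros A e1 e2. rewrite !comp_assoc, <- Hr1, <- Hr2. assoc_r. split.
    - intros E. rewrite E. split; reflexivity.
    - intros [E1 E2]. apply Hjm; assumption. }
  exists D, p1, p2. split; [exact (pullback_jointly_monic _ _ _ _ Hkp) |].
  intros A e1 e2. split.
  - intros [d [<- <-]].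
    destruct (proj1 (Hrho A (p1 \o d) (p2 \o d)) (kernel_pair_comm _ _ _ _ Hkp))
      as [E1 E2].
    split; apply (pullback_lift _ _ _ _ _ _ HS); assumption.
  - intros [[s [Hs1 Hs2]] [s' [Hs1' Hs2']]].
    apply (pullback_lift _ _ _ _ _ _ Hkp), Hrho.
    rewrite <- Hs1, <- Hs2, <- Hs1', <- Hs2'.
    split; apply kernel_pair_comm, HS.
Qed.

End FiniteLimits.

Section Regular.
Context {C : Category} (HR : regular_category C).

Lemma regular_epi_pullback_cover {A B D : C} (e : B ~> D) (a : A ~> D) :
  regular_epi e -> exists A1 (c : A1 ~> A) (s : A1 ~> B), regular_epi c /\ a \o c = e \o s.
Proof.
  intros He. destruct HR as [[_ Hpb] [_ Hst]].
  destruct (Hpb _ _ _ a e) as [Q [p1 [p2 Hp]]].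
  exists Q, p1, p2. split; [exact (Hst _ _ _ _ _ _ _ _ Hp He) | apply Hp].
Qed.

Lemma coequalizer_kernel_pair_factor_mono {A B L E : C} (rho : A ~> B)
    (l1 l2 : L ~> A) (e : A ~> E) (i : E ~> B) :
  is_kernel_pair rho l1 l2 -> is_coequalizer l1 l2 e -> i \o e = rho ->
  forall Q (h h' : Q ~> E), i \o h = i \o h' -> h = h'.
Proof.
  intros Hkp He Hi Q h h' Eih.
  assert (Hre : regular_epi e) by (exists L, l1, l2; exact He).
  destruct (regular_epi_pullback_cover e h Hre) as [Q1 [c1 [s [Hc1 Hs]]]].
  destruct (regular_epi_pullback_cover e (h' \o c1) Hre) as [Q2 [c2 [s' [Hc2 Hs']]]].
  destruct (pullback_lift _ _ _ _ (s \o c2) s' Hkp) as [m [Hm1 Hm2]].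
  { rewrite <- Hi. assoc_r. rewrite <- Hs'.
    rewrite (comp_assoc _ _ _ _ _ e s c2), <- Hs. rewrite !comp_assoc, Eih. reflexivity. }
  apply (regular_epi_epi c1); [exact Hc1 |]. apply (regular_epi_epi c2); [exact Hc2 |].
  rewrite Hs, Hs', <- comp_assoc, <- Hm1, <- Hm2, !comp_assoc, (proj1 He). reflexivity.
Qed.

Lemma image_exists {A X : C} (a b : A ~> X) :
  exists E (e : A ~> E) (e1 e2 : E ~> X),
    regular_epi e /\ e1 \o e = a /\ e2 \o e = b /\ jointly_monic e1 e2.
Proof.
  pose proof HR as [HF [Hcoeq _]].
  destruct (binary_product_exists HF X X) as [XX [pi1 [pi2 [Hjm Hpr]]]].
  destruct (Hpr _ a b) as [rho [Hr1 Hr2]].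
  destruct (kernel_pair_exists HF rho) as [L [l1 [l2 Hkp]]].
  destruct (Hcoeq _ _ _ _ _ _ Hkp) as [E [e He]].
  destruct (proj2 He XX rho (proj1 Hkp)) as [i [Hi _]].
  exists E, e, (pi1 \o i), (pi2 \o i).
  split; [exists L, l1, l2; exact He |].
  split; [rewrite <- comp_assoc, Hi; exact Hr1 |].
  split; [rewrite <- comp_assoc, Hi; exact Hr2 |].
  intros Q h h' E1 E2.
  apply (coequalizer_kernel_pair_factor_mono rho l1 l2 e i Hkp He Hi).
  apply Hjm; rewrite !comp_assoc; assumption.
Qed.

End Regular.

Section Gumm.
Context {C : Category}.

Lemma kernel_pairs_meet_le {P A Z R S T : C} (g : P ~> A) (phi : P ~> Z)
    (t1 t2 : T ~> P) (s1 s2 : S ~> P) (r1 r2 : R ~> P) :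
  jointly_monic g phi -> is_kernel_pair g t1 t2 -> is_kernel_pair phi s1 s2 ->
  rel_reflexive r1 r2 -> meet_le t1 t2 s1 s2 r1 r2.
Proof.
  intros Hjm HT HS Hr Q a b E1 E2.
  assert (Ediag : t1 \o a = t2 \o a).
  { apply Hjm; [apply kernel_pair_comm, HT |].
    rewrite E1, E2. apply kernel_pair_comm, HS. }
  destruct (Hr Q (t1 \o a)) as [c [H1 H2]].
  exists c. rewrite H1, H2, Ediag. split; reflexivity.
Qed.

Lemma box_map {X R T S DT DR : C} (r1 r2 : R ~> X) (t1 t2 : T ~> X) (s1 s2 : S ~> X)
    (m : T ~> R) (p1 p2 : DT ~> T) (q1 q2 : DR ~> R) :
  r1 \o m = t1 -> r2 \o m = t2 ->
  is_box t1 t2 s1 s2 p1 p2 -> is_box r1 r2 s1 s2 q1 q2 ->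
  exists i, q1 \o i = m \o p1 /\ q2 \o i = m \o p2.
Proof.
  intros Hm1 Hm2 [_ HDT] [_ HDR]. apply HDR.
  destruct (proj1 (HDT DT p1 p2)) as [[s [E1 E2]] [s' [E1' E2']]].
  { exists (idm DT). rewrite !id_right. split; reflexivity. }
  rewrite !comp_assoc, Hm1, Hm2. split; [exists s | exists s']; auto.
Qed.

(* The Gumm property for [ker g], [ker phi] and [ker x], applied to the element
   [((b, b'), (a, a'))] of [ker g [] ker phi], whose first column lies in [ker x]. *)
Lemma gumm_shifting (HG : gumm_category C) {P X A Z : C}
    (x : P ~> X) (g : P ~> A) (phi : P ~> Z) :
  (forall Q (a b : Q ~> P), x \o a = x \o b -> g \o a = g \o b) ->
  jointly_monic g phi ->
  forall Q (a b b' a' : Q ~> P), phi \o a = phi \o b -> x \o b = x \o b' ->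
    g \o a' = g \o a -> phi \o a' = phi \o b' -> x \o a' = x \o a.
Proof.
  intros Hxg Hjm Q a b b' a' Hab Hbb' Haa' Ha'b'.
  destruct HG as [HF Hgumm].
  destruct (kernel_pair_exists HF phi) as [S [s1 [s2 HS]]].
  destruct (kernel_pair_exists HF x) as [KX [x1 [x2 HKX]]].
  destruct (kernel_pair_exists HF g) as [T [t1 [t2 HT]]].
  destruct (pullback_lift _ _ _ _ x1 x2 HT) as [m [Hm1 Hm2]].
  { apply Hxg, HKX. }
  destruct (box_exists HF x1 x2 phi s1 s2 HS) as [DT [p1 [p2 HDT]]].
  destruct (box_exists HF t1 t2 phi s1 s2 HS) as [DR [q1 [q2 HDR]]].
  destruct (box_map _ _ _ _ _ _ m _ _ _ _ Hm1 Hm2 HDT HDR) as [i [Hi1 Hi2]].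
  destruct (Hgumm _ _ _ _ _ _ _ _ _ _
              (kernel_pair_equivalence _ _ _ HT) (kernel_pair_equivalence _ _ _ HS)
              (kernel_pair_equivalence _ _ _ HKX)
              (kernel_pairs_meet_le _ _ _ _ _ _ _ _ Hjm HT HS
                 (proj1 (proj2 (kernel_pair_equivalence _ _ _ HKX))))
              m Hm1 Hm2 _ _ _ _ _ _ HDT HDR i Hi1 Hi2) as [Hfib _].
  destruct (pullback_lift _ _ _ _ b b' HKX Hbb') as [kx [Hkx1 Hkx2]].
  destruct (pullback_lift _ _ _ _ b b' HT (Hxg _ _ _ Hbb')) as [kb [Hkb1 Hkb2]].
  destruct (pullback_lift _ _ _ _ a a' HT (eq_sym Haa')) as [ka [Hka1 Hka2]].
  destruct (proj2 (proj2 HDR Q kb ka)) as [d [Hd1 Hd2]].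
  { rewrite Hkb1, Hka1, Hkb2, Hka2.
    split; apply (pullback_lift _ _ _ _ _ _ HS); symmetry; assumption. }
  destruct (pullback_lift _ _ _ _ d kx Hfib) as [hh [Hh1 Hh2]].
  { apply (pullback_jointly_monic _ _ _ _ HT); rewrite Hd1, comp_assoc, ?Hm1, ?Hm2.
    - rewrite Hkb1, Hkx1. reflexivity.
    - rewrite Hkb2, Hkx2. reflexivity. }
  assert (Hka : ka = m \o (p2 \o hh)).
  { rewrite <- Hd2, <- Hh1, comp_assoc, Hi2, <- comp_assoc. reflexivity. }
  rewrite <- Hka1, <- Hka2, Hka, !(comp_assoc _ _ _ _ _ _ m), Hm1, Hm2.
  symmetry. apply kernel_pair_comm, HKX.
Qed.

End Gumm.

Section Proposition.
Context {C : Category} (HR : regular_category C).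
Variables (P Z X Y U V : C) (phi : P ~> Z) (x : P ~> X) (f : X ~> Y) (y : Z ~> Y)
  (u : X ~> U) (v : Y ~> V) (w : U ~> V).
Hypotheses (Hfx : f \o x = y \o phi) (Hwu : w \o u = v \o f)
  (Hout : is_pullback w (v \o y) (u \o x) phi).

Lemma outer_comm {Q : C} (p : Q ~> P) : w \o (u \o (x \o p)) = v \o (y \o (phi \o p)).
Proof. rewrite !comp_assoc, Hwu, <- (comp_assoc _ _ _ _ _ v f), Hfx. assoc_r. reflexivity. Qed.

Lemma outer_lift {Q : C} (t : Q ~> U) (z : Q ~> Z) :
  w \o t = v \o (y \o z) -> exists p, u \o (x \o p) = t /\ phi \o p = z.
Proof.
  intros E. destruct (pullback_lift _ _ _ _ t z Hout) as [p [H1 H2]].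
  { rewrite E, comp_assoc. reflexivity. }
  exists p. rewrite comp_assoc. auto.
Qed.

Lemma outer_jointly_monic {Q : C} (p p' : Q ~> P) :
  u \o (x \o p) = u \o (x \o p') -> phi \o p = phi \o p' -> p = p'.
Proof.
  intros E1 E2. apply (pullback_jointly_monic _ _ _ _ Hout); [rewrite <- !comp_assoc |];
    assumption.
Qed.

Lemma squares_pullback_of_jointly_monic :
  regular_epi y -> jointly_monic u f -> is_pullback f y x phi /\ is_pullback w v u f.
Proof.
  intros Hy Huf. split; split; [exact Hfx | | exact Hwu |].
  - intros Q q1 q2 Eq.
    destruct (outer_lift (u \o q1) q2) as [p [Hp1 Hp2]].
    { rewrite comp_assoc, Hwu, <- comp_assoc, Eq. reflexivity. }
    assert (Hxp : x \o p = q1).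
    { apply Huf; [exact Hp1 |].
      rewrite comp_assoc, Hfx, <- comp_assoc, Hp2. symmetry. exact Eq. }
    exists p. split; [exact Hxp | split; [exact Hp2 |]].
    intros p' H1 H2. apply outer_jointly_monic; [rewrite H1, Hxp | rewrite H2, Hp2];
      reflexivity.
  - intros Q q1 q2 Eq.
    destruct (regular_epi_pullback_cover HR y q2 Hy) as [Q1 [c [z [Hc Hz]]]].
    destruct (outer_lift (q1 \o c) z) as [p [Hp1 Hp2]].
    { rewrite comp_assoc, Eq, <- comp_assoc, Hz. reflexivity. }
    destruct (regular_epi_lift_jointly_monic u f q1 q2 c (x \o p) Huf Hc)
      as [h [H1 H2]]; [exact Hp1 | |].
    { rewrite comp_assoc, Hfx, <- comp_assoc, Hp2. symmetry. exact Hz. }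
    exists h. split; [exact H1 | split; [exact H2 |]].
    intros h' E1 E2. apply Huf; [rewrite E1, H1 | rewrite E2, H2]; reflexivity.
Qed.

Hypotheses (HG : gumm_category C) (Hphi : regular_epi phi) (Hx : regular_epi x).

Section KernelImage.
(* [(e1, e2)] is the regular image of [ker phi] along [x], i.e. the relation [x(ker phi)]. *)
Variables (S E : C) (s1 s2 : S ~> P) (e : S ~> E) (e1 e2 : E ~> X).
Hypotheses (HS : is_kernel_pair phi s1 s2) (He : regular_epi e)
  (He1 : e1 \o e = x \o s1) (He2 : e2 \o e = x \o s2) (Hjm : jointly_monic e1 e2).

Lemma kernel_image_intro {Q : C} (a c : Q ~> P) :
  phi \o a = phi \o c -> exists h, e1 \o h = x \o a /\ e2 \o h = x \o c.
Proof.
  intros Hac. destruct (pullback_lift _ _ _ _ a c HS Hac) as [s [Hs1 Hs2]].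
  exists (e \o s). rewrite !comp_assoc, He1, He2, <- !comp_assoc, Hs1, Hs2.
  split; reflexivity.
Qed.

Lemma kernel_image_elim {Q : C} (h : Q ~> E) :
  exists Q1 (c : Q1 ~> Q) (a a' : Q1 ~> P), regular_epi c /\ phi \o a = phi \o a' /\
    x \o a = e1 \o (h \o c) /\ x \o a' = e2 \o (h \o c).
Proof.
  destruct (regular_epi_pullback_cover HR e h He) as [Q1 [c [s [Hc Hs]]]].
  exists Q1, c, (s1 \o s), (s2 \o s).
  split; [exact Hc | split; [apply kernel_pair_comm, HS |]].
  rewrite Hs, !comp_assoc, He1, He2. split; reflexivity.
Qed.

Lemma kernel_image_meet_ker_u {Q : C} (h : Q ~> E) :
  u \o (e1 \o h) = u \o (e2 \o h) -> e1 \o h = e2 \o h.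
Proof.
  intros Hu. destruct (kernel_image_elim h) as [Q1 [c [a [a' [Hc [Haa' [Ha Ha']]]]]]].
  assert (a = a') as <-.
  { apply outer_jointly_monic; [| exact Haa'].
    rewrite Ha, Ha', !comp_assoc. rewrite !comp_assoc in Hu. rewrite Hu. reflexivity. }
  apply (regular_epi_epi c); [exact Hc |].
  rewrite <- !comp_assoc, <- Ha, <- Ha'. reflexivity.
Qed.

Lemma kernel_image_reflexive : rel_reflexive e1 e2.
Proof.
  intros Q a. destruct (regular_epi_pullback_cover HR x a Hx) as [Q1 [c [p [Hc Hp]]]].
  destruct (kernel_image_intro p p eq_refl) as [h [H1 H2]].
  apply (regular_epi_lift_jointly_monic e1 e2 a a c h Hjm Hc); [rewrite H1 | rewrite H2];
    symmetry; exact Hp.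
Qed.

Lemma kernel_image_symmetric : rel_symmetric e1 e2.
Proof.
  intros Q h. destruct (kernel_image_elim h) as [Q1 [c [a [a' [Hc [Haa' [Ha Ha']]]]]]].
  destruct (kernel_image_intro a' a (eq_sym Haa')) as [h1 [H1 H2]].
  apply (regular_epi_lift_jointly_monic e1 e2 _ _ c h1 Hjm Hc);
    [rewrite H1, Ha' | rewrite H2, Ha]; apply comp_assoc.
Qed.

(* Transitivity of [x(ker phi)] at the level of points of [P]; this is where the Gumm
   property enters. *)
Lemma kernel_image_intro_shifted {Q : C} (a b b' d : Q ~> P) :
  phi \o a = phi \o b -> x \o b = x \o b' -> phi \o b' = phi \o d ->
  exists h, e1 \o h = x \o a /\ e2 \o h = x \o d.
Proof.
  intros Hab Hbb' Hb'd.
  destruct (outer_lift (u \o (x \o a)) (phi \o b')) as [a' [Ha'1 Ha'2]].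
  { rewrite outer_comm, Hab, <- outer_comm, Hbb', outer_comm. reflexivity. }
  assert (Hxa' : x \o a' = x \o a).
  { apply (gumm_shifting HG x (u \o x) phi) with b b'; auto.
    - intros Q' p p' Ep. rewrite <- !comp_assoc, Ep. reflexivity.
    - exact (pullback_jointly_monic _ _ _ _ Hout).
    - rewrite <- !comp_assoc. exact Ha'1. }
  destruct (kernel_image_intro a' d (eq_trans Ha'2 Hb'd)) as [h [H1 H2]].
  exists h. rewrite H1, Hxa', H2. split; reflexivity.
Qed.

Lemma kernel_image_transitive : rel_transitive e1 e2.
Proof.
  intros Q h k Ehk.
  destruct (kernel_image_elim h) as [Q1 [c1 [a [b [Hc1 [Hab [Ha Hb]]]]]]].
  destruct (kernel_image_elim (k \o c1)) as [Q2 [c2 [b' [d [Hc2 [Hb'd [Hb' Hd]]]]]]].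
  destruct (kernel_image_intro_shifted (a \o c2) (b \o c2) b' d) as [h2 [H1 H2]];
    [rewrite !comp_assoc, Hab; reflexivity | | exact Hb'd |].
  { rewrite comp_assoc, Hb, Hb'. assoc_r. apply comp_eq_r, Ehk. }
  destruct (regular_epi_lift_jointly_monic e1 e2 (e1 \o h \o c1) (e2 \o k \o c1) c2 h2
              Hjm Hc2) as [h1 [G1 G2]].
  { rewrite H1, comp_assoc, Ha. assoc_r. reflexivity. }
  { rewrite H2, Hd. assoc_r. reflexivity. }
  apply (regular_epi_lift_jointly_monic e1 e2 _ _ c1 h1 Hjm Hc1);
    [rewrite G1 | rewrite G2]; reflexivity.
Qed.

Lemma kernel_image_equivalence : is_equivalence_relation e1 e2.
Proof.
  split; [exact Hjm | split; [exact kernel_image_reflexive |]].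
  split; [exact kernel_image_symmetric | exact kernel_image_transitive].
Qed.

Lemma kernel_image_discrete_fibration_l {K : C} (k1 k2 : K ~> U) (hE : E ~> K) :
  is_kernel_pair w k1 k2 -> k1 \o hE = u \o e1 -> k2 \o hE = u \o e2 ->
  is_pullback u k1 e1 hE.
Proof.
  intros HK HhE1 HhE2.
  pose proof (equivalence_jointly_monic_l e1 e2 u kernel_image_equivalence
                (@kernel_image_meet_ker_u)) as Hjm_u.
  split; [symmetry; exact HhE1 |]. intros Q q1 q2 Eq.
  destruct (regular_epi_pullback_cover HR x q1 Hx) as [Q1 [c [a [Hc Ha]]]].
  destruct (outer_lift (k2 \o (q2 \o c)) (phi \o a)) as [a' [Ha'1 Ha'2]].
  { rewrite <- (kernel_pair_comm _ _ _ _ HK), (comp_assoc _ _ _ _ _ k1), <- Eq,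
      <- comp_assoc, Ha.
    apply outer_comm. }
  destruct (kernel_image_intro a a' (eq_sym Ha'2)) as [h1 [H1 H2]].
  destruct (regular_epi_lift_jointly_monic e1 (u \o e2) q1 (k2 \o q2) c h1 Hjm_u Hc)
    as [h [G1 G2]].
  { rewrite H1. symmetry. exact Ha. }
  { rewrite <- comp_assoc, H2, Ha'1. apply comp_assoc. }
  exists h. split; [exact G1 | split].
  - apply (pullback_jointly_monic _ _ _ _ HK); rewrite comp_assoc.
    + rewrite HhE1, <- comp_assoc, G1. exact Eq.
    + rewrite HhE2. exact G2.
  - intros h' G1' G2'. apply Hjm_u; [rewrite G1, G1'; reflexivity |].
    rewrite G2, <- HhE2, <- comp_assoc, G2'. reflexivity.
Qed.

Hypothesis Hpo : is_pushout x phi f y.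

Lemma jointly_monic_of_kernel_image_kernel_pair {W : C} (g : X ~> W) :
  is_kernel_pair g e1 e2 -> jointly_monic u f.
Proof.
  intros Hg.
  destruct (regular_epi_factor phi (g \o x) Hphi) as [gz Hgz].
  { intros Q a c Hac. destruct (kernel_image_intro a c Hac) as [h [H1 H2]].
    assoc_r. rewrite <- H1, <- H2. apply kernel_pair_comm, Hg. }
  destruct (proj2 Hpo W g gz (eq_sym Hgz)) as [gy [Hgy _]].
  intros Q a b Eu Ef.
  destruct (pullback_lift _ _ _ _ a b Hg) as [h [H1 H2]].
  { rewrite <- Hgy. assoc_r. rewrite Ef. reflexivity. }
  rewrite <- H1, <- H2. apply kernel_image_meet_ker_u. rewrite H1, H2. exact Eu.
Qed.

End KernelImage.

Lemma kernel_image_effective (HC : almost_exact C) {S E : C} (s1 s2 : S ~> P)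
    (e : S ~> E) (e1 e2 : E ~> X) :
  is_kernel_pair phi s1 s2 -> regular_epi e -> e1 \o e = x \o s1 -> e2 \o e = x \o s2 ->
  jointly_monic e1 e2 -> effective_relation e1 e2.
Proof.
  intros HS He He1 He2 Hjm.
  destruct (kernel_pair_exists (proj1 HR) w) as [K [k1 [k2 HK]]].
  destruct (proj1 (proj2 HR) _ _ _ _ _ _ HK) as [Q [q Hq]].
  destruct (pullback_lift _ _ _ _ (u \o e1) (u \o e2) HK) as [hE [HhE1 HhE2]].
  { apply (regular_epi_epi e); [exact He |]. assoc_r.
    rewrite He1, He2, !outer_comm, (proj1 HS). reflexivity. }
  apply (proj2 HC _ _ _ q k1 k2 (ex_intro _ K (ex_intro _ k1 (ex_intro _ k2 Hq)))
           (kernel_pair_of_coequalizer _ _ _ _ HK Hq) X E e1 e2 u hE); auto.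
  - exact (kernel_image_equivalence _ _ _ _ _ _ _ HS He He1 He2 Hjm).
  - exact (kernel_image_discrete_fibration_l _ _ _ _ _ _ _ HS He He1 He2 Hjm
             _ _ _ HK HhE1 HhE2).
  - exact (kernel_image_discrete_fibration_l _ _ _ _ _ _ _ (kernel_pair_swap _ _ _ HS)
             He He2 He1 (jointly_monic_swap _ _ Hjm)
             _ _ _ (kernel_pair_swap _ _ _ HK) HhE2 HhE1).
Qed.

End Proposition.

Theorem proposition4p2 (C : Category) (HC : almost_exact C) (HG : gumm_category C)
  (P Z X Y U V : C)
  (phi : P ~> Z) (x : P ~> X) (f : X ~> Y) (y : Z ~> Y)
  (u : X ~> U) (v : Y ~> V) (w : U ~> V) :
  f \o x = y \o phi ->
  w \o u = v \o f ->
  regular_epi phi -> regular_epi x -> regular_epi f -> regular_epi y ->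
  is_pushout x phi f y ->
  is_pullback w (v \o y) (u \o x) phi ->
  is_pullback f y x phi /\ is_pullback w v u f.
Proof.
  intros Hfx Hwu Hphi Hx _ Hy Hpo Hout.
  pose proof (proj1 HC) as HR.
  destruct (kernel_pair_exists (proj1 HR) phi) as [S [s1 [s2 HS]]].
  destruct (image_exists HR (x \o s1) (x \o s2)) as [E [e [e1 [e2 [He [He1 [He2 Hjm]]]]]]].
  destruct (kernel_image_effective HR P Z X Y U V phi x f y u v w Hfx Hwu Hout HG Hx HC
              s1 s2 e e1 e2 HS He He1 He2 Hjm) as [W [g Hg]].
  apply (squares_pullback_of_jointly_monic HR P Z X Y U V phi x f y u v w Hfx Hwu Hout Hy).
  exact (jointly_monic_of_kernel_image_kernel_pair HR P Z X Y U V phi x f y u v w Hout Hphi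
           S E s1 s2 e e1 e2 HS He He1 He2 Hpo g Hg).
Qed.
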